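(* Let $\mathcal H=\mathbb C^d$ with orthonormal basis $\{|k\rangle\}_{k=1}^d$. A quantum channel $\mathcal M$ on $M_d(\mathbb C)$ is multiphase covariant if and only if it admits a representation $$\mathcal M(\rho)=\sum_{i=1}^r M_i\rho M_i^\dagger+\sum_{k=1}^d\sum_{j\neq k}p(j|k)\,|j\rangle\langle k|\rho|k\rangle\langle j|,$$ where each $M_i$ is diagonal in the basis $\{|k\rangle\}$ and each $p(j|k)\ge0$.
   Context: For $\boldsymbol\theta\in[0,2\pi)^d$ let $U_{\boldsymbol\theta}=\sum_k e^{i\theta_k}|k\rangle\langle k|$ and $\mathcal U_{\boldsymbol\theta}=U_{\boldsymbol\theta}\cdot U_{\boldsymbol\theta}^\dagger$. A quantum channel $\mathcal M$ is multiphase covariant if $\mathcal U_{\boldsymbol\theta}\circ\mathcal M=\mathcal M\circ\mathcal U_{\boldsymbol\theta}$ for all $\boldsymbol\theta$. *)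

(* Complex numbers are modelled by an arbitrary
   numClosedFieldType C (e.g. algC). *)
From HB Require Import structures.
From mathcomp Require Import all_boot all_order all_algebra.
Set Implicit Arguments. Unset Strict Implicit. Unset Printing Implicit Defensive.
Import Order.TTheory GRing.Theory Num.Theory.
Local Open Scope ring_scope.

Definition adjmx (C : numClosedFieldType) m n (A : 'M[C]_(m, n)) : 'M[C]_(n, m) :=
  map_mx Num.conj (A^T).

Definition psdF (C : numClosedFieldType) (I : finType) (A : I -> I -> C) : Prop :=
  forall v : I -> C, 0 <= \sum_(i : I) \sum_(j : I) Num.conj (v i) * A i j * v j.

Definition is_linear_map (C : numClosedFieldType) d (Phi : 'M[C]_d -> 'M[C]_d) : Prop :=
  forall (a : C) (A B : 'M[C]_d), Phi (a *: A + B) = a *: Phi A + Phi B.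

(* Complete positivity: for every n, id_n (x) Phi maps positive semidefinite
   operators on C^n (x) C^d (indexed by 'I_n * 'I_d) to positive
   semidefinite ones.  (id_n (x) Phi) acts blockwise on the d x d blocks
   X_(a,b) = \matrix_(k,l) X (a,k) (b,l). *)
Definition completely_positive (C : numClosedFieldType) d (Phi : 'M[C]_d -> 'M[C]_d) : Prop :=
  forall (n : nat) (X : 'I_n * 'I_d -> 'I_n * 'I_d -> C),
    psdF X ->
    psdF (fun p q : 'I_n * 'I_d =>
            Phi (\matrix_(k, l) X (p.1, k) (q.1, l)) p.2 q.2).

Definition trace_preserving (C : numClosedFieldType) d (Phi : 'M[C]_d -> 'M[C]_d) : Prop :=
  forall rho : 'M[C]_d, \tr (Phi rho) = \tr rho.

Definition quantum_channel (C : numClosedFieldType) d (Phi : 'M[C]_d -> 'M[C]_d) : Prop :=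
  [/\ is_linear_map Phi, completely_positive Phi & trace_preserving Phi].

(* U_theta = sum_k e^{i theta_k} |k><k|, with the phases e^{i theta_k} given
   as unit-modulus scalars u k. *)
Definition phase_unitary (C : numClosedFieldType) d (u : 'I_d -> C) : 'M[C]_d :=
  diag_mx (\row_k u k).

Definition multiphase_covariant (C : numClosedFieldType) d (Phi : 'M[C]_d -> 'M[C]_d) : Prop :=
  forall u : 'I_d -> C, (forall k, `|u k| = 1) ->
  forall rho : 'M[C]_d,
    phase_unitary u *m Phi rho *m adjmx (phase_unitary u)
    = Phi (phase_unitary u *m rho *m adjmx (phase_unitary u)).

From HB Require Import structures.
From mathcomp Require Import all_boot all_order all_algebra.
From mathcomp Require Import ring.
Set Implicit Arguments. Unset Strict Implicit. Unset Printing Implicit Defensive.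
Import Order.TTheory GRing.Theory Num.Theory.
Local Open Scope ring_scope.

(* Conjugating the input |k><l| by a phase unitary U_u multiplies it by
   u_k u_l^*, and conjugating the output multiplies the (a, b) entry by
   u_a u_b^*.  With phases i at a single site these factors differ unless
   a = b and k = l, or (a, b) = (k, l); hence Phi(rho)_ab = rho_ab A_ab for
   a <> b, where A_ab = Phi(|a><b|)_ab, while the diagonal of Phi(rho) only
   depends on the diagonal of rho, with weights p(j|k) = Phi(|k><k|)_jj >= 0.
   The matrix A is a compression of the Choi matrix, hence positive
   semidefinite, and a Cholesky-type factorisation
   A_ab = sum_i m_i(a) m_i(b)^* gives the diagonal Kraus operators
   M_i = diag(m_i).  Conversely, diagonal matrices commute with U_u and
   |j><k| rho |k><j| = rho_kk |j><j| is invariant under phase conjugation. *)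

Section HermitianForm.
Variables (C : numClosedFieldType) (I : finType).
Implicit Types (A : I -> I -> C) (v : I -> C).

Definition qform A v : C := \sum_i \sum_j (v i)^* * A i j * v j.

Definition unitv (a : I) : I -> C := fun i => (i == a)%:R.

Lemma sum_mul_unitv (F : I -> C) a : \sum_i F i * unitv a i = F a.
Proof.
rewrite (bigD1 a) //= /unitv eqxx mulr1 big1 ?addr0 // => i /negbTE ->.
exact: mulr0.
Qed.

Lemma sum_unitv_mul (F : I -> C) a : \sum_i unitv a i * F i = F a.
Proof. by rewrite -(sum_mul_unitv F a); apply: eq_bigr => i _; rewrite mulrC. Qed.

Lemma conj_unitv a i : (unitv a i)^* = unitv a i.
Proof. exact: rmorph_nat. Qed.

Lemma qform_unitv A a : qform A (unitv a) = A a a.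
Proof.
rewrite /qform; under eq_bigr do under eq_bigr do rewrite conj_unitv -mulrA.
by under eq_bigr do rewrite -mulr_sumr sum_mul_unitv; rewrite sum_unitv_mul.
Qed.

Lemma qform_shift A v k t :
  qform A (fun i => v i + unitv k i * t) =
  qform A v + t * (\sum_i (v i)^* * A i k) + t^* * (\sum_j A k j * v j)
  + t^* * t * A k k.
Proof.
have expand i j : (v i + unitv k i * t)^* * A i j * (v j + unitv k j * t)
    = (v i)^* * A i j * v j + ((v i)^* * A i j * t) * unitv k j
      + unitv k i * (t^* * A i j * v j) + unitv k i * ((t^* * A i j * t) * unitv k j).
  by rewrite rmorphD rmorphM /= conj_unitv; ring.
rewrite /qform; under eq_bigr do under eq_bigr do rewrite expand.
under eq_bigr do rewrite !big_split /= sum_mul_unitv -!mulr_sumr sum_mul_unitv.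
rewrite !big_split /= !sum_unitv_mul !mulr_sumr.
congr (_ + _ + _ + _); [apply: eq_bigr => i _; ring | apply: eq_bigr => i _; ring | ring].
Qed.

Section Semidefinite.
Variable A : I -> I -> C.
Hypothesis psdA : psdF A.

Lemma psdF_diag_ge0 a : 0 <= A a a.
Proof. by have := psdA (unitv a); rewrite -[X in 0 <= X]/(qform A _) qform_unitv. Qed.

Lemma psdF_conj_diag a : (A a a)^* = A a a.
Proof. exact/geC0_conj/psdF_diag_ge0. Qed.

(* Polarization: the forms at [e_a + e_b] and [e_a + i e_b] are real. *)
Lemma psdF_hermitian a b : A b a = (A a b)^*.
Proof.
have := psdA (fun i => unitv a i + unitv b i * 1).
have := psdA (fun i => unitv a i + unitv b i * 'i).
rewrite -!/(qform _ _) !qform_shift qform_unitv sum_mul_unitv.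
under eq_bigr do rewrite conj_unitv; rewrite sum_unitv_mul.
move=> /geC0_conj + /geC0_conj.
rewrite !(rmorphD, rmorphM, rmorph1) /= !conjCK conjCi !psdF_conj_diag.
rewrite !mul1r !mulrN !mulNr => /addIr; rewrite -!addrA => /addrI Ei.
move=> /addrI; rewrite !addrA => /addIr E1.
set x := A a b in Ei E1 *; set y := A b a in Ei E1 *.
have Ei' : y^* - x^* = x - y.
  by apply: (mulfI (@neq0Ci C)); rewrite !mulrBr -Ei addrC.
have : (y^* - x) *+ 2 = (x^* + y^*) - (x + y) + ((y^* - x^*) - (x - y)) by ring.
rewrite E1 Ei' !subrr addr0 => /eqP; rewrite mulrn_eq0 /= subr_eq0 => /eqP <-.
by rewrite conjCK.
Qed.

(* A form vanishing at [e_k] is linear along [e_k], so it would take negative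
   values if row [k] had a nonzero entry. *)
Lemma psdF_row_eq0 k b : A k k = 0 -> A k b = 0.
Proof.
move=> Akk0; apply/eqP/negPn/negP => Akb_neq0.
have Abk_neq0 : A b k != 0 by rewrite (psdF_hermitian k b) conjC_eq0.
pose t := - (A b b + 1) / (2 * A b k).
have := psdA (fun i => unitv b i + unitv k i * t).
rewrite -/(qform _ _) qform_shift qform_unitv sum_mul_unitv.
under eq_bigr do rewrite conj_unitv; rewrite sum_unitv_mul Akk0 mulr0 addr0.
have -> : t^* = - (A b b + 1) / (2 * A k b).
  rewrite /t !(rmorphM, rmorphN, rmorphD, fmorphV, rmorph1, rmorph_nat) /=.
  by rewrite psdF_conj_diag (psdF_hermitian k b) conjCK.
have -> : A b b + t * A b k + - (A b b + 1) / (2 * A k b) * A k b = -1.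
  by rewrite /t; field; rewrite Abk_neq0 Akb_neq0.
by rewrite oppr_ge0 ler10.
Qed.

Lemma psdF_schur k : A k k != 0 ->
  psdF (fun a b => A a b - A a k * A k b / A k k).
Proof.
move=> Akk_neq0 v; set y := \sum_j A k j * v j.
have Ey : \sum_i (v i)^* * A i k = y^*.
  rewrite /y rmorph_sum; apply: eq_bigr => i _.
  by rewrite (psdF_hermitian k i) rmorphM mulrC.
have -> : \sum_i \sum_j (v i)^* * (A i j - A i k * A k j / A k k) * v j
    = qform A v - y^* * y / A k k.
  rewrite -Ey /y -mulrA mulr_suml /qform -sumrB; apply: eq_bigr => i _.
  by rewrite mulr_suml mulr_sumr -sumrB; apply: eq_bigr => j _; ring.
pose t := - y / A k k.
have := psdA (fun i => v i + unitv k i * t).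
rewrite -/(qform _ _) qform_shift Ey -/y.
have -> : t^* = - y^* / A k k.
  by rewrite /t !(rmorphM, rmorphN, fmorphV) /= psdF_conj_diag.
suff -> : qform A v + t * y^* + - y^* / A k k * y + - y^* / A k k * t * A k k
   = qform A v - y^* * y / A k k by [].
by rewrite /t; field.
Qed.
End Semidefinite.

(* Peel off the rank-one term A_.k A_k. / A_kk; row k of the Schur complement
   vanishes, so induction on the set of nonzero rows applies. *)
Lemma psdF_gram_on n (S : {set I}) A : (#|S| <= n)%N -> psdF A ->
    (forall a b, a \notin S -> A a b = 0) ->
  exists s : seq (I -> C), forall a b, A a b = \sum_(m <- s) m a * (m b)^*.
Proof.
elim: n S A => [|n IHn] S A leSn psdA suppA.
  exists [::] => a b; rewrite big_nil suppA //.
  by move: leSn; rewrite leqn0 cards_eq0 => /eqP ->; rewrite in_set0.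
have [S0 | [k kS]] := set_0Vmem S.
  by apply: (IHn _ _ _ psdA suppA); rewrite S0 cards0.
have leSkn : (#|S :\ k| <= n)%N by move: leSn; rewrite (cardsD1 k S) kS.
have [Akk0 | Akk_neq0] := eqVneq (A k k) 0.
  apply: (IHn _ _ leSkn psdA) => a b; rewrite in_setD1 negb_and negbK.
  by case/orP => [/eqP -> | /suppA ->] //; apply: (psdF_row_eq0 psdA).
have [s Es] : exists s : seq (I -> C), forall a b,
    A a b - A a k * A k b / A k k = \sum_(m <- s) m a * (m b)^*.
  apply: (IHn _ _ leSkn (psdF_schur psdA Akk_neq0)) => a b.
  rewrite in_setD1 negb_and negbK => /orP [/eqP -> | aS].
    by rewrite mulrAC divff // mul1r subrr.
  by rewrite (suppA a b) // (suppA a k) // !mul0r subrr.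
pose sq := sqrtC (A k k).
have sq_conj : sq^* = sq by rewrite geC0_conj // sqrtC_ge0 psdF_diag_ge0.
have sqK : sq * sq = A k k by rewrite -expr2 sqrtCK.
have sq_neq0 : sq != 0 by rewrite sqrtC_eq0.
exists ((fun a => A a k / sq) :: s) => a b.
rewrite big_cons -Es rmorphM fmorphV /= sq_conj -(psdF_hermitian psdA b k) -sqK.
by field.
Qed.

Lemma psdF_gram A : psdF A ->
  exists r (m : 'I_r -> I -> C), forall a b, A a b = \sum_(i < r) m i a * (m i b)^*.
Proof.
move=> psdA; have [|s Es] := psdF_gram_on (leqnn #|[set: I]|) psdA.
  by move=> a b; rewrite in_setT.
exists (size s), (fun i => nth (fun _ => 0) s i) => a b.
by rewrite Es (big_nth (fun _ => 0)) big_mkord.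
Qed.

Lemma psdF_rank1 (w : I -> C) : psdF (fun a b => w a * (w b)^*).
Proof.
move=> v; pose S := \sum_b (w b)^* * v b.
have -> : \sum_a \sum_b (v a)^* * (w a * (w b)^*) * v b = S * S^*.
  rewrite rmorph_sum mulr_sumr; apply: eq_bigr => a _; rewrite mulr_suml.
  by apply: eq_bigr => b _; rewrite rmorphM /= conjCK; ring.
exact: mul_conjC_ge0.
Qed.

Lemma psdF_comp (J : finType) (f : J -> I) A :
  psdF A -> psdF (fun a b => A (f a) (f b)).
Proof.
(* [w] is the push-forward of [v] along [f]. *)
move=> psdA v; pose w i := \sum_a unitv (f a) i * v a.
have sum_w (F : I -> C) : \sum_i F i * w i = \sum_a F (f a) * v a.
  under eq_bigr do rewrite mulr_sumr; rewrite exchange_big; apply: eq_bigr => a _.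
  by under eq_bigr do rewrite mulrA; rewrite -mulr_suml sum_mul_unitv.
have sum_cw (F : I -> C) : \sum_i (w i)^* * F i = \sum_a (v a)^* * F (f a).
  under eq_bigr do rewrite rmorph_sum mulr_suml; rewrite exchange_big.
  apply: eq_bigr => a _.
  under eq_bigr do rewrite rmorphM /= conj_unitv -mulrA mulrCA.
  by rewrite -mulr_sumr sum_unitv_mul.
have := psdA w; rewrite -/(qform _ _) /qform.
under eq_bigr do under eq_bigr do rewrite -mulrA.
under eq_bigr do rewrite -mulr_sumr sum_w.
rewrite sum_cw; under eq_bigr do rewrite mulr_sumr.
by under eq_bigr do under eq_bigr do rewrite mulrA.
Qed.

End HermitianForm.

Arguments unitv {C I} a i.

Section Sandwich.
Variables (C : numClosedFieldType) (d : nat).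
Implicit Types (X D M : 'M[C]_d) (u : 'I_d -> C).

Lemma diag_sandwich_entry D M X a b : is_diag_mx D -> is_diag_mx M ->
  (D *m X *m adjmx M) a b = D a a * X a b * (M b b)^*.
Proof.
move=> /is_diag_mxP diagD /is_diag_mxP diagM.
rewrite !mxE (bigD1 b) //= big1 ?addr0 => [|j jb]; last first.
  by rewrite !mxE diagM ?rmorph0 ?mulr0 // eq_sym.
rewrite !mxE (bigD1 a) //= big1 ?addr0 // => i ia.
by rewrite diagD ?mul0r // eq_sym.
Qed.

Lemma phase_sandwich_entry u X a b :
  (phase_unitary u *m X *m adjmx (phase_unitary u)) a b = u a * X a b * (u b)^*.
Proof. by rewrite diag_sandwich_entry ?diag_mx_is_diag // !mxE !eqxx !mulr1n. Qed.

Lemma diag_sandwichC D M X : is_diag_mx D -> is_diag_mx M ->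
  M *m (D *m X *m adjmx D) *m adjmx M = D *m (M *m X *m adjmx M) *m adjmx D.
Proof.
move=> diagD diagM; apply/matrixP => a b.
by rewrite !diag_sandwich_entry //; ring.
Qed.

Lemma delta_sandwich X (j k : 'I_d) :
  delta_mx j k *m X *m delta_mx k j = X k k *: delta_mx j j.
Proof.
apply/matrixP => a b; rewrite !mxE (bigD1 k) //= big1 ?addr0 => [|l lk]; last first.
  by rewrite [delta_mx k j l b]mxE (negbTE lk) mulr0.
rewrite [delta_mx k j k b]mxE !mxE eqxx (bigD1 k) //= big1 ?addr0 => [|l lk]; last first.
  by rewrite !mxE (negbTE lk) andbF mul0r.
rewrite !mxE !eqxx !andbT.
by case: (a == j); case: (b == j); rewrite ?mulr1 ?mul1r ?mulr0 ?mul0r.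
Qed.

Lemma phase_sandwich_delta u (j k : 'I_d) :
  phase_unitary u *m delta_mx j k *m adjmx (phase_unitary u)
  = (u j * (u k)^*) *: delta_mx j k.
Proof.
apply/matrixP => a b; rewrite phase_sandwich_entry !mxE.
by case: (eqVneq a j) => [-> | _]; case: (eqVneq b k) => [-> | _] /=;
  rewrite ?mulr1 ?mulr0 ?mul0r.
Qed.

Lemma diag_kraus_entry r (m : 'I_r -> 'I_d -> C) X a b :
  (\sum_i diag_mx (\row_j m i j) *m X *m adjmx (diag_mx (\row_j m i j))) a b
  = X a b * \sum_i m i a * (m i b)^*.
Proof.
rewrite summxE mulr_sumr; apply: eq_bigr => i _.
by rewrite diag_sandwich_entry ?diag_mx_is_diag // !mxE !eqxx !mulr1n; ring.
Qed.

Lemma dephasing_entry (p : 'I_d -> 'I_d -> C) X a b :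
  (\sum_k \sum_(j | j != k) p j k *: (delta_mx j k *m X *m delta_mx k j)) a b
  = if a == b then \sum_(k | k != a) p a k * X k k else 0.
Proof.
rewrite summxE; under eq_bigr do rewrite summxE.
under eq_bigr do under eq_bigr do rewrite delta_sandwich !mxE.
case: eqVneq => [<- | ab].
  rewrite [RHS]big_mkcond; apply: eq_bigr => k _; under eq_bigr do rewrite andbb.
  case: (eqVneq k a) => [-> | ka] /=.
    by rewrite big1 // => j; rewrite eq_sym => /negbTE ->; rewrite !mulr0.
  rewrite (bigD1 a) 1?eq_sym //= eqxx mulr1 big1 ?addr0 // => j /andP [_ /negbTE].
  by rewrite eq_sym => ->; rewrite !mulr0.
rewrite big1 // => k _; rewrite big1 // => j _.
by case: (eqVneq a j) => [<- | _] /=; rewrite ?[b == a]eq_sym ?(negbTE ab) mulr0n !mulr0.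
Qed.

End Sandwich.

Lemma Ci_neq_real (C : numClosedFieldType) (x : C) : x \is Num.real -> 'i != x.
Proof. by move=> xR; apply: contraNneq (nonRealCi C) => ->. Qed.

Lemma oppCi_neq_real (C : numClosedFieldType) (x : C) : x \is Num.real -> - 'i != x.
Proof. by rewrite -realN => /Ci_neq_real; rewrite eqr_oppLR. Qed.

Lemma Ci_neq_oppCi (C : numClosedFieldType) : 'i != - 'i :> C.
Proof. by apply: contraNneq (nonRealCi C) => Ei; rewrite CrealE conjCi -Ei. Qed.

Section Channel.
Variables (C : numClosedFieldType) (d : nat) (Phi : 'M[C]_d -> 'M[C]_d).

Lemma choi_psd : completely_positive Phi ->
  psdF (fun p q : 'I_d * 'I_d => Phi (delta_mx p.1 q.1) p.2 q.2).
Proof.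
(* The image under id (x) Phi of |Omega><Omega|, Omega = sum_k |k>|k>. *)
move=> cpPhi v.
have := cpPhi d _ (psdF_rank1 (fun p : 'I_d * 'I_d => (p.1 == p.2)%:R : C)) v.
have E (p q : 'I_d) :
    \matrix_(k, l) ((p == k)%:R * ((q == l)%:R)^*) = delta_mx p q :> 'M[C]_d.
  by apply/matrixP => k l; rewrite !mxE rmorph_nat -natrM mulnb eq_sym [q == l]eq_sym.
by under eq_bigr do under eq_bigr do rewrite /= E.
Qed.

Lemma choi_diag_psd : completely_positive Phi ->
  psdF (fun a b => Phi (delta_mx a b) a b).
Proof. by move=> cpPhi; apply: (psdF_comp (fun a => (a, a)) (choi_psd cpPhi)). Qed.

Section Linear.
Hypothesis linPhi : is_linear_map Phi.

Lemma linear_map0 : Phi 0 = 0.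
Proof.
have := linPhi 1 0 0; rewrite !scale1r addr0 => Phi0D.
by apply: (@addrI _ (Phi 0)); rewrite addr0 -Phi0D.
Qed.

Lemma linear_mapD X Y : Phi (X + Y) = Phi X + Phi Y.
Proof. by rewrite -[X in LHS]scale1r linPhi scale1r. Qed.

Lemma linear_mapZ c X : Phi (c *: X) = c *: Phi X.
Proof. by rewrite -[_ *: _]addr0 linPhi linear_map0 addr0. Qed.

Lemma linear_map_entry rho a b :
  Phi rho a b = \sum_k \sum_l rho k l * Phi (delta_mx k l) a b.
Proof.
rewrite {1}(matrix_sum_delta rho) (big_morph Phi linear_mapD linear_map0) summxE.
apply: eq_bigr => k _; rewrite (big_morph Phi linear_mapD linear_map0) summxE.
by apply: eq_bigr => l _; rewrite linear_mapZ mxE.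
Qed.

Section Covariant.
Hypothesis covPhi : multiphase_covariant Phi.

Lemma covariant_entry_eq0 (u : 'I_d -> C) (k l a b : 'I_d) :
  (forall y, `|u y| = 1) ->
  u a * (u b)^* != u k * (u l)^* -> Phi (delta_mx k l) a b = 0.
Proof.
move=> unit_u neq_ab_kl; have := covPhi unit_u (delta_mx k l).
move/(congr1 (fun M : 'M[C]_d => M a b)).
rewrite phase_sandwich_entry phase_sandwich_delta linear_mapZ mxE mulrAC => /eqP.
by rewrite -subr_eq0 -mulrBl mulf_eq0 subr_eq0 (negbTE neq_ab_kl) => /eqP.
Qed.

Definition iphase (x : 'I_d) : 'I_d -> C := fun y => if y == x then 'i else 1.

Lemma iphase_norm x y : `|iphase x y| = 1.
Proof. by rewrite /iphase; case: (y == x); rewrite ?normCi ?normr1. Qed.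

Lemma covariant_diag_eq0 (k l a : 'I_d) : k != l -> Phi (delta_mx k l) a a = 0.
Proof.
move=> kl; apply: (covariant_entry_eq0 (iphase_norm k)).
rewrite -normCK iphase_norm expr1n /iphase eqxx [l == k]eq_sym (negbTE kl).
by rewrite conjC1 mulr1 eq_sym Ci_neq_real ?real1.
Qed.

Lemma covariant_offdiag_eq0 (k l a b : 'I_d) : a != b -> (k != a) || (l != b) ->
  Phi (delta_mx k l) a b = 0.
Proof.
move=> ab; have [-> /= lb | ka _] := eqVneq k a.
  apply: (covariant_entry_eq0 (iphase_norm b)).
  rewrite /iphase eqxx (negbTE ab) (negbTE lb) conjCi conjC1 !mul1r.
  by rewrite oppCi_neq_real ?real1.
apply: (covariant_entry_eq0 (iphase_norm a)).
rewrite /iphase eqxx (negbTE ka) [b == a]eq_sym (negbTE ab) conjC1 mulr1 mul1r.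
by case: (l == a); rewrite ?conjCi ?conjC1 ?Ci_neq_oppCi ?Ci_neq_real ?real1.
Qed.

Lemma covariant_entry rho a b : Phi rho a b =
  if a == b then \sum_k rho k k * Phi (delta_mx k k) a a
  else rho a b * Phi (delta_mx a b) a b.
Proof.
rewrite linear_map_entry; case: eqVneq => [<- | ab].
  apply: eq_bigr => k _; rewrite (bigD1 k) //= big1 ?addr0 // => l lk.
  by rewrite covariant_diag_eq0 ?mulr0 // eq_sym.
rewrite (bigD1 a) //= [X in _ + X]big1 ?addr0 => [|k ka]; last first.
  by rewrite big1 // => l _; rewrite covariant_offdiag_eq0 ?ka ?mulr0.
rewrite (bigD1 b) //= big1 ?addr0 // => l lb.
by rewrite covariant_offdiag_eq0 ?lb ?orbT ?mulr0.
Qed.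

End Covariant.
End Linear.
End Channel.

Lemma diag_kraus_dephasing_covariant (C : numClosedFieldType) d r
    (M : 'I_r -> 'M[C]_d) (p : 'I_d -> 'I_d -> C) :
  (forall i, is_diag_mx (M i)) ->
  multiphase_covariant (fun rho => \sum_i M i *m rho *m adjmx (M i)
    + \sum_k \sum_(j | j != k) p j k *: (delta_mx j k *m rho *m delta_mx k j)).
Proof.
move=> diagM u unit_u rho; have U_diag := diag_mx_is_diag (\row_k u k).
have unit_conj y : u y * (u y)^* = 1 by rewrite -normCK unit_u expr1n.
rewrite mulmxDr mulmxDl !mulmx_sumr !mulmx_suml; congr (_ + _).
  by apply: eq_bigr => i _; rewrite diag_sandwichC.
apply: eq_bigr => k _; rewrite mulmx_sumr mulmx_suml; apply: eq_bigr => j _.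
rewrite !delta_sandwich -!scalemxAr -!scalemxAl phase_sandwich_delta.
by rewrite phase_sandwich_entry unit_conj scale1r mulrAC unit_conj mul1r.
Qed.

Theorem mainTheorem8 (C : numClosedFieldType) (d : nat)
    (Phi : 'M[C]_d -> 'M[C]_d) :
  quantum_channel Phi ->
  (multiphase_covariant Phi <->
   exists (r : nat) (M : 'I_r -> 'M[C]_d) (p : 'I_d -> 'I_d -> C),
     (forall i, is_diag_mx (M i)) /\
     (forall j k : 'I_d, j != k -> 0 <= p j k) /\
     (forall rho : 'M[C]_d,
        Phi rho =
          \sum_(i < r) (M i *m rho *m adjmx (M i))
        + \sum_(k < d) \sum_(j < d | j != k)
            p j k *: (delta_mx j k *m rho *m delta_mx k j))).
Proof.
move=> [linPhi cpPhi _]; split=> [covPhi | [r [M [p [diagM [_ PhiE]]]]]]; last first.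
  by move=> u unit_u rho; rewrite !PhiE; apply: diag_kraus_dephasing_covariant.
have [r [m Em]] := psdF_gram (choi_diag_psd cpPhi).
exists r, (fun i => diag_mx (\row_j m i j)), (fun j k => Phi (delta_mx k k) j j).
split; first by move=> i; apply: diag_mx_is_diag.
split; first by move=> j k _; apply: (psdF_diag_ge0 (choi_psd cpPhi) (k, j)).
move=> rho; apply/matrixP => a b.
rewrite mxE diag_kraus_entry dephasing_entry (covariant_entry linPhi covPhi) -Em.
case: eqVneq => [<- | _]; last by rewrite addr0.
rewrite (bigD1 a) //=; congr (_ + _); apply: eq_bigr => k _; exact: mulrC.
Qed.
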